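(* Let $p>2$ be a prime and $\alpha\ge 3$ an integer, and let $n=p^\alpha$. Then the independent domination polynomial $D_i(\Gamma(\mathbb{Z}_n),x)$ is log-concave but not unimodal.
   Context: For an integer $n\ge 2$, the zero divisor graph $\Gamma(\mathbb{Z}_n)$ is the simple graph whose vertices are the nonzero zero divisors of $\mathbb{Z}_n$, with distinct vertices $a,b$ adjacent if and only if $ab\equiv 0\pmod n$. An independent dominating set of a graph $G$ is a set of pairwise non-adjacent vertices such that every vertex outside the set is adjacent to some vertex in it. If $d_i(G,k)$ denotes the number of independent dominating sets of $G$ of cardinality $k$, the independent domination polynomial is $D_i(G,x)=\sum_{k} d_i(G,k)x^k$. For a polynomial $\sum_{i=0}^b a_i x^i$ of degree $b$ (with $a_i=0$ for absent powers): it is unimodal if there is an index $0\le t\le b$ with $a_0\le a_1\le\dots\le a_t\ge a_{t+1}\ge\dots\ge a_b$; it is log-concave if $a_j^2\ge a_{j-1}a_{j+1}$ for all $1\le j\le b-1$. *)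

From mathcomp Require Import all_boot all_order all_algebra.
Set Implicit Arguments. Unset Strict Implicit. Unset Printing Implicit Defensive.
Import GRing.Theory Num.Theory.

(* Z_n is represented by 'I_n (residues 0..n-1), multiplication mod n. *)

Definition zdiv_vertex (n : nat) (a : 'I_n) : bool :=
  (val a != 0) && [exists b : 'I_n, (val b != 0) && ((val a * val b) %% n == 0)].

Definition zdg_vertices (n : nat) : {set 'I_n} := [set a | zdiv_vertex a].

Definition zdg_adj (n : nat) (a b : 'I_n) : bool :=
  [&& zdiv_vertex a, zdiv_vertex b, a != b & (val a * val b) %% n == 0].

Definition zdg_indep_dom (n : nat) (S : {set 'I_n}) : bool :=
  [&& S \subset zdg_vertices n,
      [forall x in S, forall y in S, ~~ zdg_adj x y] &
      [forall v in zdg_vertices n :\: S, exists u in S, zdg_adj u v]].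

Definition d_i (n k : nat) : nat :=
  #|[set S : {set 'I_n} | zdg_indep_dom S & #|S| == k]|.

(* independent domination polynomial D_i(Gamma(Z_n), x); all independent
   dominating sets have size <= n, so k ranges over 0..n *)
Definition Di_poly (n : nat) : {poly int} :=
  (\poly_(k < n.+1) ((d_i n k)%:R : int))%R.

Local Open Scope ring_scope.

Definition unimodal (q : {poly int}) : Prop :=
  exists2 t : nat, (t <= (size q).-1)%N &
    (forall i : nat, (i < t)%N -> q`_i <= q`_i.+1) /\
    (forall i : nat, (t <= i)%N -> (i < (size q).-1)%N -> q`_i.+1 <= q`_i).

Definition log_concave (q : {poly int}) : Prop :=
  forall j : nat, (1 <= j)%N -> (j <= (size q).-1.-1)%N ->
    q`_j.-1 * q`_j.+1 <= q`_j ^+ 2.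

(* In Z_(p^α) the vertices are the nonzero multiples of p, and two distinct
   vertices are adjacent exactly when their p-adic valuations add up to at least
   α.  Hence an independent dominating set S either contains a vertex u with
   2 v(u) >= α, and is then u together with all vertices of valuation
   < α - v(u), or it is the set of all vertices of valuation < α - α/2.
   Counting multiples of powers of p, |S| is 1 + p^(α-1) - p^v(u)
   with α <= 2 v(u) < 2α, or p^(α-1) - p^(α/2).  For p > 2 no such size equals 2 and no
   two of them differ by 2, so every product d_(j-1) d_(j+1) vanishes, giving
   log-concavity; on the other hand d_1 > 0 (the singleton {p^(α-1)}), d_2 = 0,
   and d_k > 0 for some k >= 3 (a maximal independent set through p and 2p),
   which rules out unimodality. *)

From mathcomp Require Import all_boot all_order all_algebra zify.
Set Implicit Arguments. Unset Strict Implicit. Unset Printing Implicit Defensive.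
Import Order.TTheory GRing.Theory Num.Theory.

Lemma card_ord_dvdn (N d : nat) : 0 < d -> d %| N ->
  #|[set a : 'I_N | d %| a]| = N %/ d.
Proof.
move=> d_gt0 dvd_dN.
rewrite cardsE -sum1_card big_mkcond /= divn_count_dvd.
rewrite -(big_mkord xpredT (fun i => if d %| i then 1 else 0)).
case: N dvd_dN => [|N] dvd_dN; first by rewrite !big_geq.
rewrite [in LHS]big_ltn // [in RHS]big_nat_recr //= dvd_dN dvdn0 /= addnC.
by congr (_ + _); apply: eq_bigr => i _; case: (d %| i).
Qed.

Lemma zdg_adjC n (a b : 'I_n) : zdg_adj a b = zdg_adj b a.
Proof.
by rewrite /zdg_adj eq_sym mulnC; case: (zdiv_vertex a) (zdiv_vertex b) => [] [].
Qed.

Lemma zdg_adjxx n (a : 'I_n) : zdg_adj a a = false.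
Proof. by rewrite /zdg_adj eqxx !andbF. Qed.

Definition zdg_indep (n : nat) (S : {set 'I_n}) : bool :=
  (S \subset zdg_vertices n) && [forall x in S, forall y in S, ~~ zdg_adj x y].

Lemma zdg_indepP n (S : {set 'I_n}) :
  reflect ({in S, forall x, zdiv_vertex x} /\ {in S &, forall x y, ~~ zdg_adj x y})
          (zdg_indep S).
Proof.
apply: (iffP andP) => [[/subsetP sub /forall_inP ind]|[vS indS]]; split.
- by move=> x /sub; rewrite inE.
- by move=> x y xS yS; move/forall_inP: (ind x xS); apply.
- by apply/subsetP => x xS; rewrite inE vS.
- by apply/forall_inP => x xS; apply/forall_inP => y yS; apply: indS.
Qed.

Lemma zdg_indep_domP n (S : {set 'I_n}) :
  reflect [/\ {in S, forall x, zdiv_vertex x}, {in S &, forall x y, ~~ zdg_adj x y}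
            & forall w, zdiv_vertex w -> w \notin S -> exists2 u, u \in S & zdg_adj u w]
          (zdg_indep_dom S).
Proof.
rewrite /zdg_indep_dom andbA -/(zdg_indep S).
apply: (iffP andP) => [[/zdg_indepP[vS indS] /forall_inP dom]|[vS indS dom]].
  split=> // w vw wS.
  by apply/exists_inP/dom; rewrite !inE wS vw.
split; first exact/zdg_indepP.
apply/forall_inP => w; rewrite !inE => /andP[wS vw].
by have [u uS uw] := dom w vw wS; apply/exists_inP; exists u.
Qed.

Lemma zdg_indep_extend n (S : {set 'I_n}) :
  zdg_indep S -> exists2 M, zdg_indep_dom M & S \subset M.
Proof.
move=> indS; have [M /maxsetP[indM maxM] subSM] := maxset_exists indS.
exists M => //; have [vM indMM] := zdg_indepP _ indM.
apply/zdg_indep_domP; split=> // w vw wM.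
apply/exists_inP/contraT => /exists_inPn noadj.
suff indwM : zdg_indep (w |: M).
  by move/setP/(_ w): (maxM _ indwM (subsetUr _ _)); rewrite setU11 (negbTE wM).
apply/zdg_indepP; split=> [x|x y]; rewrite !inE.
  by case/predU1P => [->|/vM].
case/predU1P => [->|xM] /predU1P[->|yM]; rewrite ?zdg_adjxx //.
- by rewrite zdg_adjC noadj.
- exact: noadj.
- exact: indMM.
Qed.

Lemma d_i_gt0P n k :
  reflect (exists2 S : {set 'I_n}, zdg_indep_dom S & #|S| = k) (0 < d_i n k).
Proof.
apply: (iffP card_gt0P) => [[S]|[S S_id <-]]; last by exists S; rewrite inE S_id /=.
by rewrite inE => /andP[S_id /eqP <-]; exists S.
Qed.

Section PrimePowerZeroDivisorGraph.

Variables p al : nat.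
Hypothesis p_prime : prime p.
Hypothesis al_gt0 : 0 < al.

Local Notation n := (p ^ al).

Let p_gt0 : 0 < p := prime_gt0 p_prime.

Lemma zdiv_vertexE (a : 'I_n) : zdiv_vertex a = (0 < a) && (p %| a).
Proof.
rewrite /zdiv_vertex lt0n; have [//|/eqP a_neq0 /=] := eqVneq (val a) 0.
apply/existsP/idP => [[b /andP[b_neq0 ab]]|pa].
  apply: contraLR (ltn_ord b) => pNa; rewrite -leqNgt dvdn_leq ?lt0n //.
  have co_na : coprime n a by rewrite coprime_pexpl // prime_coprime.
  by rewrite -(Gauss_dvdr _ co_na).
have lt_b : p ^ al.-1 < n by rewrite ltn_exp2l ?prime_gt1 // prednK.
exists (Ordinal lt_b); rewrite /= -lt0n expn_gt0 p_gt0 /=.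
by case/dvdnP: pa => k ->; rewrite -mulnA -expnS prednK //; apply/dvdn_mull.
Qed.

Lemma logn_zdiv_vertex (a : 'I_n) : zdiv_vertex a -> 0 < logn p a < al.
Proof.
rewrite zdiv_vertexE => /andP[a_gt0 pa].
rewrite -(pfactor_dvdn 1 p_prime a_gt0) expn1 pa /= ltnNge.
by rewrite -(pfactor_dvdn _ p_prime a_gt0) gtnNdvd.
Qed.

Lemma zdg_adjE (a b : 'I_n) : zdiv_vertex a -> zdiv_vertex b ->
  zdg_adj a b = (a != b) && (al <= logn p a + logn p b).
Proof.
move=> va vb; rewrite /zdg_adj va vb /=.
move: va vb; rewrite !zdiv_vertexE => /andP[a_gt0 _] /andP[b_gt0 _].
by rewrite -lognM // -pfactor_dvdn ?muln_gt0 ?a_gt0.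
Qed.

Lemma card_zdiv_vertex_logn_lt k : 0 < k <= al ->
  #|[set w : 'I_n | zdiv_vertex w & logn p w < k]| = p ^ al.-1 - p ^ (al - k).
Proof.
case/andP=> k_gt0 k_le_al.
have -> : [set w : 'I_n | zdiv_vertex w & logn p w < k] =
          [set w : 'I_n | p %| w] :\: [set w : 'I_n | p ^ k %| w].
  apply/setP => w; rewrite !inE zdiv_vertexE.
  have [->|w_gt0] /= := posnP w; first by rewrite !dvdn0.
  by rewrite (pfactor_dvdn _ p_prime w_gt0) -ltnNge andbC.
have pk_dvd_n : p ^ k %| n by rewrite dvdn_exp2l.
have p_pk : p %| p ^ k by rewrite -{1}(expn1 p) dvdn_exp2l.
rewrite cardsD (setIidPr _); last first.
  by apply/subsetP => w; rewrite !inE; apply: dvdn_trans.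
rewrite !card_ord_dvdn ?expn_gt0 ?p_gt0 ?(dvdn_trans p_pk) //.
by rewrite -(expnB p_gt0 k_le_al) -[X in _ %/ X]expn1 -expnB // subn1.
Qed.

Section IndependentDominatingSet.

Variable S : {set 'I_n}.
Hypothesis S_indep_dom : zdg_indep_dom S.

Lemma zdg_indep_dom_high u : u \in S -> al <= (logn p u).*2 ->
  S = u |: [set w : 'I_n | zdiv_vertex w & logn p w < al - logn p u].
Proof.
move=> uS high_u; have [vS indS domS] := zdg_indep_domP _ S_indep_dom.
have low_S x : x \in S -> x != u -> logn p x < al - logn p u.
  move=> xS x_neq_u; have := indS u x uS xS.
  by rewrite zdg_adjE ?vS // eq_sym x_neq_u -ltnNge; lia.
apply/setP => w; rewrite !inE; have [->|w_neq_u] //= := eqVneq w u.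
apply/idP/andP => [wS|[vw low_w]]; first by rewrite vS // low_S.
apply: contraT => wNS; have [y yS] := domS w vw wNS.
rewrite zdg_adjE ?(vS y) // => /andP[_]; have [->|y_neq_u] := eqVneq y u; first lia.
by have := low_S y yS y_neq_u; lia.
Qed.

Lemma zdg_indep_dom_low : (forall u, u \in S -> (logn p u).*2 < al) ->
  S = [set w : 'I_n | zdiv_vertex w & logn p w < al - al./2].
Proof.
move=> low_S; have [vS _ domS] := zdg_indep_domP _ S_indep_dom.
apply/setP => w; rewrite inE.
apply/idP/andP => [wS|[vw low_w]]; first by have := low_S w wS; rewrite vS //; lia.
apply: contraT => wNS; have [y yS] := domS w vw wNS.
by rewrite zdg_adjE ?(vS y) // => /andP[_]; have := low_S y yS; lia.
Qed.

End IndependentDominatingSet.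

Lemma card_zdg_indep_dom_high (S : {set 'I_n}) u : zdg_indep_dom S -> u \in S ->
  al <= (logn p u).*2 -> #|S| = (p ^ al.-1 - p ^ logn p u).+1.
Proof.
move=> S_id uS high_u; have [vS _ _] := zdg_indep_domP _ S_id.
have v_u := logn_zdiv_vertex (vS u uS).
have u_high : al - logn p u <= logn p u by lia.
rewrite (zdg_indep_dom_high S_id uS high_u) cardsU1 inE (vS u uS) /= ltnNge u_high.
by rewrite card_zdiv_vertex_logn_lt ?subKn //; lia.
Qed.

Definition zdg_indep_dom_size (s : nat) : Prop :=
  (exists2 e, al <= e.*2 < al.*2 & s = (p ^ al.-1 - p ^ e).+1)
  \/ s = p ^ al.-1 - p ^ al./2.

Lemma card_zdg_indep_dom (S : {set 'I_n}) :
  zdg_indep_dom S -> zdg_indep_dom_size #|S|.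
Proof.
move=> S_id; have [vS _ _] := zdg_indep_domP _ S_id.
have [/exists_inP[u uS high_u]|/exists_inPn low_S] :=
  boolP [exists u in S, al <= (logn p u).*2].
  left; exists (logn p u); last exact: card_zdg_indep_dom_high.
  by have := logn_zdiv_vertex (vS u uS); lia.
rewrite (zdg_indep_dom_low S_id) => [|u /low_S]; last by rewrite -ltnNge.
by rewrite card_zdiv_vertex_logn_lt; [right; congr (_ - p ^ _); lia | lia].
Qed.

Lemma d_i_gt0_size k : 0 < d_i n k -> zdg_indep_dom_size k.
Proof. by case/d_i_gt0P => S /card_zdg_indep_dom + <-. Qed.

Lemma d_i1_gt0 : 1 < al -> 0 < d_i n 1.
Proof.
move=> al_gt1; have lt_u : p ^ al.-1 < n by rewrite ltn_exp2l ?prime_gt1 // prednK.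
set u := Ordinal lt_u.
have vu : zdiv_vertex u by rewrite zdiv_vertexE /= expn_gt0 p_gt0 dvdn_exp //; lia.
have /zdg_indep_extend[M M_id] : zdg_indep [set u].
  by apply/zdg_indepP; split=> [x|x y]; rewrite !inE => /eqP-> // /eqP->; rewrite zdg_adjxx.
rewrite sub1set => uM; apply/d_i_gt0P; exists M => //.
by rewrite (card_zdg_indep_dom_high M_id uM) /= pfactorK ?subnn //; lia.
Qed.

Lemma d_i_gt0_card_gt1 : 2 < p -> 2 < al -> exists2 k, 1 < k & 0 < d_i n k.
Proof.
move=> p_gt2 al_gt2.
have p3_le_n : p ^ 3 <= n by rewrite leq_pexp2l.
have lt_p : p < n by apply: leq_trans p3_le_n; rewrite !expnS expn0; nia.
have lt_2p : 2 * p < n by apply: leq_trans p3_le_n; rewrite !expnS expn0; nia.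
set a := Ordinal lt_p; set b := Ordinal lt_2p.
have va : zdiv_vertex a by rewrite zdiv_vertexE /= p_gt0 dvdnn.
have vb : zdiv_vertex b by rewrite zdiv_vertexE /= muln_gt0 p_gt0 dvdn_mull.
have la : logn p a = 1 by rewrite /= -[X in logn _ X]expn1 pfactorK.
have lb : logn p b = 1 by rewrite /= lognM // (ltn_log0 p_gt2) -[X in logn _ X]expn1 pfactorK.
have a_neq_b : a != b by apply/eqP => /(congr1 val) /=; lia.
have /zdg_indep_extend[M M_id abM] : zdg_indep [set a; b].
  apply/zdg_indepP; split=> [x|x y]; rewrite !inE; first by case/orP=> /eqP->.
  move=> /orP[] /eqP-> /orP[] /eqP->; rewrite zdg_adjE ?la ?lb //; lia.
exists #|M|; last by apply/d_i_gt0P; exists M.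
by have := subset_leq_card abM; rewrite cards2 a_neq_b.
Qed.

Section SizeGaps.

Hypothesis p_gt2 : 2 < p.
Hypothesis al_gt2 : 2 < al.

Lemma expn_between_half e : al./2 <= e < al ->
  [/\ p %| p ^ e, p ^ e <= p ^ al.-1 & e = al./2 \/ p * p ^ al./2 <= p ^ e].
Proof.
case/andP=> half_le_e e_lt_al; split.
- by rewrite dvdn_exp //; lia.
- by rewrite leq_pexp2l //; lia.
have [->|] := eqVneq e al./2; [by left | rewrite neq_ltn ltnNge half_le_e /= => lt_e].
by right; rewrite -expnS leq_pexp2l.
Qed.

Lemma zdg_indep_dom_size_neq2 : ~ zdg_indep_dom_size 2.
Proof.
have [pA _ _] := @expn_between_half al.-1 ltac:(lia).
have [pC _ _] := @expn_between_half al./2 ltac:(lia).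
case=> [[e /andP[e_lo e_hi]] two_eq|two_eq].
  have [pE E_le _] := @expn_between_half e ltac:(lia).
  have : p %| p ^ e + 1 by rewrite (_ : _ + 1 = p ^ al.-1) //; lia.
  by rewrite dvdn_addr // gtnNdvd // prime_gt1.
have : p %| p ^ al./2 + 2 by rewrite (_ : _ + 2 = p ^ al.-1) //; lia.
by rewrite dvdn_addr // gtnNdvd.
Qed.

Lemma zdg_indep_dom_size_gap2 s :
  zdg_indep_dom_size s -> ~ zdg_indep_dom_size s.+2.
Proof.
have [pC C_le _] := @expn_between_half al./2 ltac:(lia).
have p_le_C : p <= p ^ al./2 by rewrite dvdn_leq ?expn_gt0 ?p_gt0.
case=> [[e /andP[e_lo e_hi]] ->|->] [[f /andP[f_lo f_hi]] eq_s|eq_s].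
- have [pE E_le _] := @expn_between_half e ltac:(lia).
  have [pF F_le _] := @expn_between_half f ltac:(lia).
  have : p %| p ^ f + 2 by rewrite (_ : _ + 2 = p ^ e) //; lia.
  by rewrite dvdn_addr // gtnNdvd.
- have [_ E_le [e_eq|E_ge]] := @expn_between_half e ltac:(lia).
    by move: eq_s; rewrite e_eq; lia.
  by nia.
- have [_ F_le [f_eq|F_ge]] := @expn_between_half f ltac:(lia).
    by move: eq_s; rewrite f_eq; lia.
  by nia.
- by lia.
Qed.

End SizeGaps.

End PrimePowerZeroDivisorGraph.

Local Open Scope ring_scope.

Lemma log_concave_gap2 (q : {poly int}) :
  (forall j, q`_j = 0 \/ q`_j.+2 = 0) -> log_concave q.
Proof.
move=> gap j j_gt0 _; have -> : j.+1 = j.-1.+2 by lia.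
by case: (gap j.-1) => ->; rewrite ?mul0r ?mulr0 sqr_ge0.
Qed.

Lemma not_unimodal_dip (q : {poly int}) k :
  0 < q`_1 -> q`_2 = 0 -> (2 < k)%N -> 0 < q`_k -> ~ unimodal q.
Proof.
move=> q1_gt0 q2_eq0 k_gt2 qk_gt0 [t _ [incr decr]].
have [t_le2|t_gt2] := leqP t 2; last first.
  by have := incr 1%N (ltnW t_gt2); rewrite q2_eq0 leNgt q1_gt0.
have k_lt : (k < size q)%N.
  by rewrite ltnNge; apply: contraTN qk_gt0 => /leq_sizeP-> //; rewrite ltxx.
have k_le : (k <= (size q).-1)%N by rewrite -ltnS (ltn_predK k_lt).
have : q`_k <= q`_2.
  apply: (@homo_leq_in _ [pred i | 2 <= i <= k]%N _ (fun x y => y <= x)) => //=.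
  - by move=> y x z yx zy; apply: (le_trans zy yx).
  - by move=> i j + + l; rewrite !inE; lia.
  - move=> i; rewrite !inE => /andP[i_ge2 _] /andP[_ i_lt].
    exact: decr (leq_trans t_le2 i_ge2) (leq_trans i_lt k_le).
  - by rewrite inE leqnn ltnW.
  - by rewrite inE leqnn ltnW.
  - exact: ltnW.
by rewrite q2_eq0 leNgt qk_gt0.
Qed.

Lemma coef_Di_poly n k : (Di_poly n)`_k = (d_i n k)%:R.
Proof.
rewrite coef_poly; case: ltnP => // n_lt_k; apply/esym/eqP; rewrite pnatr_eq0 -leqn0.
rewrite leqNgt; apply: contraL n_lt_k => /d_i_gt0P[S _ <-].
by rewrite -leqNgt -[n in (_ <= n)%N]card_ord max_card.
Qed.

Theorem mainTheorem6 (p alpha : nat) :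
  prime p -> (2 < p)%N -> (3 <= alpha)%N ->
  log_concave (Di_poly (p ^ alpha)) /\ ~ unimodal (Di_poly (p ^ alpha)).
Proof.
move=> p_prime p_gt2 al_gt2; have al_gt0 : (0 < alpha)%N by lia.
have size_d_i := d_i_gt0_size p_prime al_gt0.
have d_i2 : d_i (p ^ alpha) 2 = 0%N.
  have [//|/size_d_i size2] := posnP (d_i (p ^ alpha) 2).
  by case: (zdg_indep_dom_size_neq2 p_prime al_gt0 p_gt2 al_gt2 size2).
split.
  apply: log_concave_gap2 => j; rewrite !coef_Di_poly.
  have [->|/size_d_i size_j] := posnP (d_i (p ^ alpha) j); first by left.
  have [->|/size_d_i size_j2] := posnP (d_i (p ^ alpha) j.+2); first by right.
  by case: (zdg_indep_dom_size_gap2 p_prime al_gt0 p_gt2 al_gt2 size_j size_j2).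
have [k k_gt1 d_ik_gt0] := d_i_gt0_card_gt1 p_prime al_gt0 p_gt2 al_gt2.
have k_gt2 : (2 < k)%N.
  by rewrite ltn_neqAle k_gt1 andbT; apply: contraTneq d_ik_gt0 => <-; rewrite d_i2.
apply: (not_unimodal_dip _ _ k_gt2); rewrite !coef_Di_poly ?d_i2 ?ltr0n //.
by apply: d_i1_gt0; lia.
Qed.
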